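(* Let $X=\{x_1,\dots,x_m\} \subset \mathbb{R}^n$ be a finite set of vectors, $\lambda \ge 0$, and $w_{ij} \ge 0$ for $j=2,\dots,m$, $i=1,\dots,j-1$. For $z = \begin{bmatrix} z_1^T & \dots & z_m^T\end{bmatrix}^T \in \mathbb{R}^{mn}$ (with $z_i \in \mathbb{R}^n$) define \[ \phi(z) = \sum_{i=1}^m \|x_i - z_i\|^2 + \lambda \sum_{j=2}^m \sum_{i=1}^{j-1} w_{ij}\, s\bigl(\|z_i - z_j\|\bigr), \] where $s:\mathbb{R}\to\{0,1\}$ is given by $s(0)=0$ and $s(u)=1$ for $u \neq 0$, and, for $\alpha>0$, \[ g(z;\alpha) = \sum_{i=1}^m \|x_i - z_i\|^2 + \lambda \sum_{j=2}^m \sum_{i=1}^{j-1} w_{ij}\Bigl(1 - e^{-\alpha \|z_i - z_j\|^2}\Bigr). \] Let $\{\alpha^t\}$ be a sequence of positive scalars with $\alpha^{t+1} > \alpha^t$ for all $t$ and $\lim_{t\to\infty} \alpha^t = +\infty$. For each $\alpha>0$, let $z(\alpha)$ be a global minimizer of $g(\cdot;\alpha)$ over $\mathbb{R}^{mn}$. Then: (i) the sequence $\{g(z(\alpha^t);\alpha^t)\}$ converges; (ii) the sequence $\{z(\alpha^t)\}$ has limit points; (iii) every limit point of $\{z(\alpha^t)\}$ is a global minimizer of $\phi$ over $\mathbb{R}^{mn}$.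
   Context: $\|\cdot\|$ denotes the Euclidean norm. *)

From HB Require Import structures.
From mathcomp Require Import all_boot all_order all_algebra.
From mathcomp Require Import all_classical all_reals all_analysis.
Set Implicit Arguments. Unset Strict Implicit. Unset Printing Implicit Defensive.
Import Order.TTheory GRing.Theory Num.Theory.
Local Open Scope ring_scope.

Definition enorm (R : realType) (n : nat) (v : 'rV[R]_n) : R :=
  Num.sqrt (\sum_(k < n) (v 0 k) ^+ 2).

Definition sfun (R : realType) (u : R) : R := if u == 0 then 0 else 1.

(* phi(z) ; z : 'I_m -> 'rV_n represents z = [z_1; ...; z_m] in R^{mn};
   the pair sum over 1 <= i < j <= m is written with 0-based indices i < j *)
Definition phi (R : realType) (m n : nat) (x : 'I_m -> 'rV[R]_n) (lam : R)
  (w : 'I_m -> 'I_m -> R) (z : 'I_m -> 'rV[R]_n) : R :=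
  \sum_(i < m) (enorm (x i - z i)) ^+ 2 +
  lam * \sum_(j < m) \sum_(i < m | (i < j)%N) w i j * sfun (enorm (z i - z j)).

Definition gfun (R : realType) (m n : nat) (x : 'I_m -> 'rV[R]_n) (lam : R)
  (w : 'I_m -> 'I_m -> R) (z : 'I_m -> 'rV[R]_n) (a : R) : R :=
  \sum_(i < m) (enorm (x i - z i)) ^+ 2 +
  lam * \sum_(j < m) \sum_(i < m | (i < j)%N)
          w i j * (1 - expR (- (a * (enorm (z i - z j)) ^+ 2))).

Definition cdist (R : realType) (m n : nat) (z y : 'I_m -> 'rV[R]_n) : R :=
  Num.sqrt (\sum_(i < m) (enorm (z i - y i)) ^+ 2).

Definition seq_limit_point (R : realType) (m n : nat) (u : nat -> 'I_m -> 'rV[R]_n)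
  (p : 'I_m -> 'rV[R]_n) : Prop :=
  forall eps : R, 0 < eps -> forall N : nat, exists t : nat, (N <= t)%N /\ cdist (u t) p < eps.

(* Since 1 - exp(-alpha d^2) increases with alpha and lies below s(d), the
   optimal values g(z(alpha^t); alpha^t) increase and are bounded by phi(x),
   which gives (i).  The same bound controls the fitting term, so the z(alpha^t)
   stay in a ball around x, and Bolzano-Weierstrass gives (ii).  For (iii),
   along the times at which z(alpha^t) is close to a limit point p, the penalty
   of each pair with p_i <> p_j tends to its full weight while all other
   penalties are nonnegative; hence phi(p) <= g(z(alpha^t); alpha^t) + o(1)
   <= phi(y) + o(1) for every y. *)

From Pilot Require Import Defs.
From HB Require Import structures.
From mathcomp Require Import all_boot all_order all_algebra.
From mathcomp Require Import all_classical all_reals all_analysis.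
From mathcomp Require Import lra.
Import Order.TTheory GRing.Theory Num.Theory numFieldNormedType.Exports.
Local Open Scope classical_set_scope.
Local Open Scope ring_scope.

Lemma ler_sum_term {R : numDomainType} {I : finType} (F : I -> R) (i : I) :
  (forall j, 0 <= F j) -> F i <= \sum_j F j.
Proof. by move=> F_ge0; rewrite (bigD1 i) //= lerDl sumr_ge0. Qed.

Lemma one_sub_expR_ge0 (R : realType) (a d : R) : 0 <= a -> 0 <= 1 - expR (- (a * d ^+ 2)).
Proof.
by move=> a_ge0; rewrite subr_ge0 -expR0 ler_expR lerNl oppr0 mulr_ge0 ?sqr_ge0.
Qed.

Section coordinates.
Context {R : realType} {m n : nat}.
Implicit Types (v : 'rV[R]_n) (z y : 'I_m -> 'rV[R]_n).

Lemma enorm_sq v : enorm v ^+ 2 = \sum_(k < n) v 0 k ^+ 2.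
Proof. by rewrite /enorm sqr_sqrtr // sumr_ge0 // => k _; rewrite sqr_ge0. Qed.

Lemma cdist_sq z y :
  cdist z y ^+ 2 = \sum_(ik : 'I_m * 'I_n) (z ik.1 0 ik.2 - y ik.1 0 ik.2) ^+ 2.
Proof.
rewrite /cdist sqr_sqrtr; last by rewrite sumr_ge0 // => i _; rewrite sqr_ge0.
rewrite -(pair_bigA _ (fun i k => (z i 0 k - y i 0 k) ^+ 2)) /=.
apply: eq_bigr => i _.
by rewrite enorm_sq; apply: eq_bigr => k _; rewrite !mxE.
Qed.

Lemma coord_le_cdist z y i k : `|z i 0 k - y i 0 k| <= cdist z y.
Proof.
rewrite -ler_sqr ?nnegrE ?sqrtr_ge0 // real_normK ?num_real // cdist_sq.
apply: (ler_sum_term (fun ik : 'I_m * 'I_n => (z ik.1 0 ik.2 - y ik.1 0 ik.2) ^+ 2) (i, k)).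
by move=> ik; rewrite sqr_ge0.
Qed.

Lemma cdist_le_coord z y e : 0 <= e ->
  (forall i k, `|z i 0 k - y i 0 k| <= e) -> cdist z y <= Num.sqrt (m * n)%:R * e.
Proof.
move=> e_ge0 zy_le; rewrite -ler_sqr ?nnegrE ?mulr_ge0 ?sqrtr_ge0 //.
rewrite cdist_sq exprMn sqr_sqrtr //.
apply: le_trans (_ : \sum_(ik : 'I_m * 'I_n) e ^+ 2 <= _); last first.
  by rewrite sumr_const card_prod !card_ord mulr_natl.
apply: ler_sum => -[i k] _.
by rewrite -real_normK ?num_real // ler_sqr ?nnegrE.
Qed.

(* Bolzano-Weierstrass, transported along the identification of 'I_m -> 'rV_n with 'rV_(m * n). *)
Lemma bounded_seq_limit_point (u : nat -> 'I_m -> 'rV[R]_n) c M :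
  (forall t, cdist c (u t) <= M) -> exists p, seq_limit_point u p.
Proof.
move=> u_bounded.
pose vec z : 'rV[R]_(m * n) := mxvec (\matrix_(i, k) z i 0 k).
pose I ik := `[vec c 0 ik - M, vec c 0 ik + M]%classic.
pose box := [set v : 'rV[R]_(m * n) | forall ik, I ik (v ord0 ik)].
have box_compact : compact box.
  by apply: (@rV_compact _ _ I) => ik; exact: segment_compact.
have u_box : (vec \o u @ \oo) box.
  exists 0%N => // t _ ik; case/mxvec_indexP: ik => i k.
  rewrite /I /= !mxvecE !mxE in_itv /= -ler_distlC.
  exact: le_trans (coord_le_cdist _ _ _ _) (u_bounded t).
have [v [_ v_cluster]] := box_compact _ _ u_box.
exists (fun i => \row_k vec_mx v i k) => eps eps_gt0 N.
pose s : R := Num.sqrt (m * n)%:R.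
have s1_gt0 : 0 < s + 1 by rewrite ltr_wpDl ?sqrtr_ge0.
pose e := eps / (s + 1).
have e_gt0 : 0 < e by rewrite divr_gt0.
have [_ [[t Nt <-] /= [_ vut]]] :=
  v_cluster ((vec \o u) @` [set t | (N <= t)%N]) (ball v e)
    (filterS (fun t Nt => ex_intro2 _ _ t Nt erefl) (nbhs_infty_ge N))
    (nbhsx_ballx v e e_gt0).
exists t; split => //.
have near_v i k : `|u t i 0 k - (\row_k vec_mx v i k) 0 k| <= e.
  have := vut 0 (mxvec_index i k).
  by rewrite /ball /= -{1}(vec_mxK v) !mxvecE !mxE distrC => /ltW.
apply: le_lt_trans (@cdist_le_coord _ _ e (ltW e_gt0) near_v) _.
have -> : eps = (s + 1) * e by rewrite /e mulrC divfK ?gt_eqF.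
by rewrite ltr_pM2r // ltrDl.
Qed.

End coordinates.

Section filter_limits.
Context {R : realType} {T : Type} {F : set_system T} {FF : Filter F}.

Lemma cvgryM_pos {a s : T -> R} {c : R} : 0 < c -> a @ F --> +oo -> s @ F --> c ->
  (fun t => a t * s t) @ F --> +oo.
Proof.
move=> c_gt0 a_cvg s_cvg; apply/cvgryPge => A.
have A_le : A <= `|A| * 2 / c * (c / 2).
  by rewrite mulrA divfK ?gt_eqF // mulfK ?pnatr_eq0 // ler_norm.
near=> t; apply: le_trans A_le (ler_pM _ _ _ _) => //.
- by rewrite divr_ge0 ?mulr_ge0 // ltW.
- by rewrite divr_ge0 // ltW.
- by near: t; move/cvgryPge : a_cvg; apply.
- by near: t; move/cvgr_ge : s_cvg; apply; lra.
Unshelve. all: end_near. Qed.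

Lemma one_sub_expR_cvg1 {a s : T -> R} {c : R} : 0 < c -> a @ F --> +oo -> s @ F --> c ->
  (fun t => 1 - expR (- (a t * s t))) @ F --> (1 : R).
Proof.
move=> c_gt0 a_cvg s_cvg; rewrite -[X in _ --> X]subr0.
apply: cvgB; first exact: cvg_cst.
have := cvg_comp _ _ (cvgryM_pos c_gt0 a_cvg s_cvg) (@cvgr_expR R); apply.
Qed.

Lemma enorm_sq_cvg {n} (v : T -> 'rV[R]_n) (c : 'rV[R]_n) :
  (forall k, (fun t => v t 0 k) @ F --> c 0 k) ->
  (fun t => enorm (v t) ^+ 2) @ F --> enorm c ^+ 2.
Proof.
move=> v_cvg; under eq_cvg do rewrite enorm_sq; rewrite enorm_sq.
apply: cvg_big => [|k _]; first exact: add_continuous.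
by rewrite expr2; apply: cvgM.
Qed.

End filter_limits.

Section penalized_objective.
Context {R : realType} {m n : nat} {x : 'I_m -> 'rV[R]_n} {lam : R}
  {w : 'I_m -> 'I_m -> R}.
Hypotheses (lam_ge0 : 0 <= lam) (w_ge0 : forall i j : 'I_m, (i < j)%N -> 0 <= w i j).
Implicit Types (z y : 'I_m -> 'rV[R]_n) (a : R).

Lemma gfun_le_phi z a : gfun x lam w z a <= phi x lam w z.
Proof.
rewrite lerD2l ler_wpM2l // ler_sum // => j _; rewrite ler_sum // => i ij.
rewrite ler_wpM2l ?w_ge0 // /Defs.sfun; case: ifPn => [/eqP ->|_].
  by rewrite expr0n /= mulr0 oppr0 expR0 subrr.
by rewrite gerBl expR_ge0.
Qed.

Lemma gfun_nondecreasing z : {homo gfun x lam w z : a b / a <= b}.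
Proof.
move=> a b ab; rewrite lerD2l ler_wpM2l // ler_sum // => j _.
rewrite ler_sum // => i ij; rewrite ler_wpM2l ?w_ge0 // lerD2l lerN2 ler_expR lerN2.
by rewrite ler_wpM2r ?sqr_ge0.
Qed.

Lemma fit_le_gfun z a : 0 <= a -> \sum_i enorm (x i - z i) ^+ 2 <= gfun x lam w z a.
Proof.
move=> a_ge0; rewrite lerDl mulr_ge0 // sumr_ge0 // => j _.
by rewrite sumr_ge0 // => i ij; rewrite mulr_ge0 ?w_ge0 ?one_sub_expR_ge0.
Qed.

Lemma minimizer_le_phi z a : (forall y, gfun x lam w z a <= gfun x lam w y a) ->
  forall y, gfun x lam w z a <= phi x lam w y.
Proof. by move=> z_min y; apply: le_trans (z_min y) (gfun_le_phi y a). Qed.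

Lemma minimizer_cdist_le z a : 0 <= a ->
  (forall y, gfun x lam w z a <= gfun x lam w y a) ->
  cdist x z <= Num.sqrt (phi x lam w x).
Proof.
move=> a_ge0 z_min.
have fit_le := le_trans (fit_le_gfun z a a_ge0) (minimizer_le_phi z a z_min x).
rewrite /cdist ler_sqrt // (le_trans _ fit_le) // sumr_ge0 // => i _.
exact: sqr_ge0.
Qed.

Section limit.
Context {T : Type} {F : set_system T} {FF : ProperFilter F}.
Context {a : T -> R} {z : T -> 'I_m -> 'rV[R]_n} {p : 'I_m -> 'rV[R]_n}.
Hypotheses (a_cvg : a @ F --> +oo)
  (z_cvg : forall i k, (fun t => z t i 0 k) @ F --> p i 0 k).

(* Keeping only the pairs that are separated in the limit gives a lower bound
   for gfun which converges to phi p. *)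
Lemma phi_le_limit_gfun c : (\forall t \near F, gfun x lam w (z t) (a t) <= c) ->
  phi x lam w p <= c.
Proof.
move=> g_le.
pose pen t i j := Defs.sfun (enorm (p i - p j)) *
  (1 - expR (- (a t * enorm (z t i - z t j) ^+ 2))).
pose h t := \sum_i enorm (x i - z t i) ^+ 2 +
  lam * \sum_(j < m) \sum_(i < m | (i < j)%N) w i j * pen t i j.
have fit_cvg i : (fun t => enorm (x i - z t i) ^+ 2) @ F --> enorm (x i - p i) ^+ 2.
  apply: enorm_sq_cvg => k; rewrite !mxE; under eq_cvg do rewrite !mxE.
  exact: cvgB (cvg_cst _) (z_cvg i k).
have diff_cvg i j :
    (fun t => enorm (z t i - z t j) ^+ 2) @ F --> enorm (p i - p j) ^+ 2.
  apply: enorm_sq_cvg => k; rewrite !mxE; under eq_cvg do rewrite !mxE.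
  exact: cvgB (z_cvg i k) (z_cvg j k).
have pen_cvg i j : pen ^~ i ^~ j @ F --> Defs.sfun (enorm (p i - p j)).
  rewrite /pen /Defs.sfun; case: ifPn => [_|pij_neq0].
    by under eq_cvg do rewrite mul0r; exact: cvg_cst.
  under eq_cvg do rewrite mul1r.
  apply: one_sub_expR_cvg1 _ a_cvg (diff_cvg i j).
  by rewrite exprn_gt0 // lt_def pij_neq0 sqrtr_ge0.
have h_cvg : h @ F --> phi x lam w p.
  apply: cvgD; first by apply: cvg_big => [|i _]; [exact: add_continuous|exact: fit_cvg].
  apply: cvgM; first exact: cvg_cst.
  apply: cvg_big => [|j _]; first exact: add_continuous.
  apply: cvg_big => [|i _]; first exact: add_continuous.
  by apply: cvgM; [exact: cvg_cst | exact: pen_cvg].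
have h_le : \forall t \near F, h t <= gfun x lam w (z t) (a t).
  near=> t; rewrite lerD2l ler_wpM2l // ler_sum // => j _.
  rewrite ler_sum // => i ij; rewrite ler_wpM2l ?w_ge0 // /pen /Defs.sfun.
  case: ifPn => _; rewrite ?mul1r // mul0r one_sub_expR_ge0 //.
  by near: t; move/cvgryPge : a_cvg; apply.
apply: (closed_cvg _ (@closed_le _ c) _ _ h_cvg).
by apply: filterS2 h_le g_le => t; exact: le_trans.
Unshelve. all: end_near. Qed.

End limit.

End penalized_objective.

(* It stands in for a subsequence of u converging to p. *)
Definition limit_point_filter {R : realType} {m n : nat}
  (u : nat -> 'I_m -> 'rV[R]_n) (p : 'I_m -> 'rV[R]_n) : set_system nat :=
  filter_from [set ne : nat * R | 0 < ne.2]
    (fun ne => [set t | (ne.1 <= t)%N /\ cdist (u t) p < ne.2]).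

Section limit_point_filter.
Context {R : realType} {m n : nat} {u : nat -> 'I_m -> 'rV[R]_n} {p : 'I_m -> 'rV[R]_n}.
Local Notation G := (limit_point_filter u p).

Lemma limit_point_filter_proper : seq_limit_point u p -> ProperFilter G.
Proof.
move=> up; apply: filter_from_proper; last first.
  by move=> [N e] /= e_gt0; have [t [Nt ut]] := up e e_gt0 N; exists t.
apply: filter_from_filter; first by exists (0%N, 1); rewrite /= ltr01.
move=> [N1 e1] [N2 e2] /= e1_gt0 e2_gt0; exists (maxn N1 N2, Num.min e1 e2) => /=.
  by rewrite lt_min e1_gt0 e2_gt0.
by move=> t /= [+ +]; rewrite geq_max lt_min => /andP[? ?] /andP[? ?].
Qed.

Lemma limit_point_filter_finer {Y : Type} {f : nat -> Y} {L : set_system Y} :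
  f @ \oo `=>` L -> f @ G `=>` L.
Proof. by move=> fL A /fL [N _ fA]; exists (N, 1) => //= t [Nt _]; exact: fA. Qed.

Lemma limit_point_filter_cvg_coord {FF : Filter G} i k :
  (fun t => u t i 0 k) @ G --> p i 0 k.
Proof.
apply/cvgrPdist_lt => e e_gt0; exists (0%N, e) => //= t [_ ut].
by rewrite distrC; exact: le_lt_trans (coord_le_cdist _ _ _ _) ut.
Qed.

End limit_point_filter.

Theorem theorem1 (R : realType) (m n : nat) (x : 'I_m -> 'rV[R]_n) (lam : R)
  (w : 'I_m -> 'I_m -> R) (alpha : nat -> R) (zf : R -> 'I_m -> 'rV[R]_n)
  (hlam : 0 <= lam)
  (hw : forall i j : 'I_m, (i < j)%N -> 0 <= w i j)
  (hapos : forall t, 0 < alpha t)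
  (hinc : forall t, alpha t < alpha t.+1)
  (hinf : alpha @ \oo --> +oo)
  (hmin : forall a : R, 0 < a -> forall y : 'I_m -> 'rV[R]_n,
            gfun x lam w (zf a) a <= gfun x lam w y a) :
  cvgn (fun t => gfun x lam w (zf (alpha t)) (alpha t))
  /\ (exists p, seq_limit_point (fun t => zf (alpha t)) p)
  /\ (forall p, seq_limit_point (fun t => zf (alpha t)) p ->
        forall y : 'I_m -> 'rV[R]_n, phi x lam w p <= phi x lam w y).
Proof.
have zf_le_phi t := minimizer_le_phi hlam hw _ _ (hmin _ (hapos t)).
split; [|split].
- apply: nondecreasing_is_cvgn; last first.
    by exists (phi x lam w x) => _ [t _ <-]; exact: zf_le_phi.
  apply/nondecreasing_seqP => t.
  apply: le_trans (hmin _ (hapos t) (zf (alpha t.+1))) _.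
  exact: gfun_nondecreasing hlam hw _ _ _ (ltW (hinc t)).
- apply: (bounded_seq_limit_point _ x (Num.sqrt (phi x lam w x))) => t.
  exact: minimizer_cdist_le hlam hw _ _ (ltW (hapos t)) (hmin _ (hapos t)).
- move=> p zp y; have G_proper := limit_point_filter_proper zp.
  apply: (phi_le_limit_gfun hlam hw (limit_point_filter_finer hinf)
                            limit_point_filter_cvg_coord).
  by apply: nearW => t; exact: zf_le_phi.
Qed.
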